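(* Let $D$ be an $n\times n$ diagonal matrix with positive integer diagonal entries and let $O\in\mathrm U(n)$. Then $$\min_{\substack{V\in\mathrm U(n)\\ [V,D]=0}}\|O-V\|\le 2n\,\|[O,D]\|.$$
   Context: $[X,Y]=XY-YX$; $\|\cdot\|$ denotes the operator norm. *)

From HB Require Import structures.
From mathcomp Require Import all_boot all_order all_algebra.
From mathcomp Require Import complex.
From mathcomp Require Import classical_sets reals.
Set Implicit Arguments. Unset Strict Implicit. Unset Printing Implicit Defensive.
Import Order.TTheory GRing.Theory Num.Theory.
Local Open Scope ring_scope.
Local Open Scope classical_set_scope.

Definition cabs2 {R : realType} (z : R[i]) : R := (complex.Re z) ^+ 2 + (complex.Im z) ^+ 2.

Definition vnorm {R : realType} {n : nat} (x : 'cV[R[i]]_n) : R :=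
  Num.sqrt (\sum_(k < n) cabs2 (x k 0)).

Definition opnorm {R : realType} {n : nat} (A : 'M[R[i]]_n) : R :=
  sup [set vnorm (A *m x) | x in [set x : 'cV[R[i]]_n | vnorm x = 1]].

Definition adjmx {R : realType} {n : nat} (A : 'M[R[i]]_n) : 'M[R[i]]_n :=
  (map_mx (@conjc R) A)^T.

Definition unitary {R : realType} {n : nat} (U : 'M[R[i]]_n) : Prop :=
  U *m adjmx U = 1%:M /\ adjmx U *m U = 1%:M.

Definition commutator {R : realType} {n : nat} (X Y : 'M[R[i]]_n) : 'M[R[i]]_n :=
  X *m Y - Y *m X.

Definition natdiag {R : realType} {n : nat} (d : 'I_n -> nat) : 'M[R[i]]_n :=
  diag_mx (\row_(k < n) ((d k)%:R : R[i])).

(** Let [P] keep the entries [O i j] with [d i = d j] (the block-diagonal part of [O]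
    along the eigenspaces of [D]) and set [eps := n * ||[O, D]||]. Since the [d i] are
    integers, [|O i j| <= |[O, D] i j|] off the blocks, so every column of [O - P] has norm
    at most [||[O, D]||] and [||O - P|| <= eps]. If [eps >= 1] then [V = 1] works because
    [||O - 1|| <= 2]. Otherwise [P] is within [eps] of the unitary [O], so its singular
    values lie in [[1 - eps, 1 + eps]]; its unitary polar factor [V = P (P^* P)^(-1/2)]
    commutes with [D] (as [P] and [P^*] do) and satisfies [||P - V|| <= eps], whence
    [||O - V|| <= 2 eps]. *)

From HB Require Import structures.
From mathcomp Require Import all_boot all_order all_algebra.
From mathcomp Require Import complex.
From mathcomp Require Import classical_sets reals.
From mathcomp Require Import spectral sesquilinear.
From mathcomp Require Import ring lra boolp.
Set Implicit Arguments.
Unset Strict Implicit.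
Unset Printing Implicit Defensive.
Import Order.TTheory GRing.Theory Num.Theory.
Local Open Scope ring_scope.
Local Open Scope complex_scope.
Local Open Scope sesquilinear_scope.

Section ComplexModulus.
Variable R : realType.
Implicit Types (z w : R[i]) (r : R).

Lemma cabs2_ge0 z : 0 <= cabs2 z.
Proof. by rewrite /cabs2 addr_ge0 // sqr_ge0. Qed.

Lemma cabs2M z w : cabs2 (z * w) = cabs2 z * cabs2 w.
Proof. by case: z => a b; case: w => c e; rewrite /cabs2 /=; ring. Qed.

Lemma cabs2R r : cabs2 r%:C = r ^+ 2.
Proof. by rewrite /cabs2 /=; ring. Qed.

Lemma cabs20 : cabs2 (0 : R[i]) = 0.
Proof. by rewrite /cabs2 /= expr0n addr0. Qed.

Lemma mul_conjC_cabs2 z : z^* * z = (cabs2 z)%:C.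
Proof. by case: z => a b; rewrite /cabs2 /=; congr Complex; ring. Qed.

End ComplexModulus.

Section EuclideanNorm.
Variables (R : realType) (n : nat).
Implicit Types (x y : 'cV[R[i]]_n).

Definition vnorm2 x : R := \sum_(k < n) cabs2 (x k 0).

Lemma vnorm2_ge0 x : 0 <= vnorm2 x.
Proof. by apply: sumr_ge0 => k _; apply: cabs2_ge0. Qed.

Lemma vnormE x : vnorm x = Num.sqrt (vnorm2 x).
Proof. by []. Qed.

Lemma vnorm_ge0 x : 0 <= vnorm x.
Proof. exact: sqrtr_ge0. Qed.

Lemma sqr_vnorm x : vnorm x ^+ 2 = vnorm2 x.
Proof. by rewrite sqr_sqrtr // vnorm2_ge0. Qed.

Lemma vnorm_sqrtC x : (vnorm x)%:C = sqrtC (dotmx x^T x^T).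
Proof.
have -> : dotmx x^T x^T = (vnorm x)%:C ^+ 2.
  rewrite -rmorphXn sqr_vnorm dotmxE !mxE rmorph_sum; apply: eq_bigr => k _.
  by rewrite !mxE mulrC mul_conjC_cabs2.
by rewrite sqrCK // ler0c vnorm_ge0.
Qed.

Lemma vnormD x y : vnorm (x + y) <= vnorm x + vnorm y.
Proof.
rewrite -lecR rmorphD /= !vnorm_sqrtC linearD.
exact: (@triangle_lerif _ _ (@dotmx _ n) x^T y^T).1.
Qed.

Lemma vnormZ (a : R[i]) x : vnorm (a *: x) = Num.sqrt (cabs2 a) * vnorm x.
Proof.
rewrite !vnormE -sqrtrM ?cabs2_ge0 // /vnorm2 mulr_sumr.
by congr Num.sqrt; apply: eq_bigr => k _; rewrite mxE cabs2M.
Qed.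

Lemma vnormN x : vnorm (- x) = vnorm x.
Proof.
by rewrite -scaleN1r vnormZ /cabs2 /= oppr0 sqrrN expr1n expr0n addr0 sqrtr1 mul1r.
Qed.

Lemma vnormB x y : vnorm (x - y) <= vnorm x + vnorm y.
Proof. by rewrite -(vnormN y) vnormD. Qed.

Lemma vnorm_sum (I : finType) (F : I -> 'cV[R[i]]_n) :
  vnorm (\sum_i F i) <= \sum_i vnorm (F i).
Proof.
elim/big_rec2: _ => [|i y1 y2 _ le_y12].
  by rewrite vnormE /vnorm2 big1 ?sqrtr0 // => k _; rewrite mxE cabs20.
exact: le_trans (vnormD _ _) (lerD (lexx _) le_y12).
Qed.

Lemma vnorm_coord_le x j : Num.sqrt (cabs2 (x j 0)) <= vnorm x.
Proof.
rewrite vnormE ler_wsqrtr // /vnorm2 (bigD1 j) //= lerDl.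
by apply: sumr_ge0 => k _; apply: cabs2_ge0.
Qed.

Lemma vnorm_delta j : vnorm (delta_mx j 0 : 'cV[R[i]]_n) = 1.
Proof.
rewrite vnormE /vnorm2 (bigD1 j) //= big1 => [|k /negbTE nkj].
  by rewrite !mxE !eqxx /cabs2 /= expr1n expr0n addr0 addr0 sqrtr1.
by rewrite !mxE nkj cabs20.
Qed.

End EuclideanNorm.

Section MatrixVector.
Variable R : realType.

Lemma mulmx_col_sum m n (A : 'M[R[i]]_(m, n)) (x : 'cV[R[i]]_n) :
  A *m x = \sum_j x j 0 *: col j A.
Proof.
apply/matrixP => i k; rewrite !mxE summxE; apply: eq_bigr => j _.
by rewrite !mxE (ord1 k) mulrC.
Qed.

Lemma vnorm_mulmx_le m n (A : 'M[R[i]]_(m, n)) (x : 'cV[R[i]]_n) :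
  vnorm (A *m x) <= (\sum_j vnorm (col j A)) * vnorm x.
Proof.
rewrite mulmx_col_sum mulr_suml; apply: le_trans (vnorm_sum _) _.
apply: ler_sum => j _; rewrite vnormZ mulrC ler_wpM2l ?vnorm_ge0 //.
exact: vnorm_coord_le.
Qed.

Lemma adjmx_mul_diag m n (A : 'M[R[i]]_(m, n)) j :
  (A^t* *m A) j j = (vnorm2 (col j A))%:C.
Proof.
rewrite !mxE /vnorm2 rmorph_sum; apply: eq_bigr => k _.
by rewrite !mxE mul_conjC_cabs2.
Qed.

Lemma vnorm_isometry m n (A : 'M[R[i]]_(m, n)) (x : 'cV[R[i]]_n) :
  A^t* *m A = 1%:M -> vnorm (A *m x) = vnorm x.
Proof.
move=> isoA; rewrite !vnormE; congr Num.sqrt; apply: complexI.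
rewrite -[x in RHS](col_id 0) -[A *m x](col_id 0) -!adjmx_mul_diag.
by rewrite trmx_mul map_mxM mulmxA -(mulmxA _ _ A) isoA mulmx1.
Qed.

Lemma vnorm_unitary n (U : 'M[R[i]]_n) (x : 'cV[R[i]]_n) :
  U \is unitarymx -> vnorm (U *m x) = vnorm x.
Proof. by move/unitarymxP/mulmx1C; apply: vnorm_isometry. Qed.

Lemma adjmxE n (A : 'M[R[i]]_n) : adjmx A = A^t*.
Proof. by rewrite /adjmx map_trmx. Qed.

Lemma unitaryP n (U : 'M[R[i]]_n) : unitary U <-> U \is unitarymx.
Proof.
rewrite /unitary adjmxE; split => [[/unitarymxP //]|/unitarymxP U1].
by split => //; apply: mulmx1C.
Qed.

End MatrixVector.

Section OperatorNorm.
Variables (R : realType) (n : nat).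
Implicit Types (A : 'M[R[i]]_n) (x : 'cV[R[i]]_n).

Lemma opnorm_le A (K : R) :
  0 <= K -> (forall x, vnorm (A *m x) <= K * vnorm x) -> opnorm A <= K.
Proof.
move=> K_ge0 leAK; rewrite /opnorm; set E := (X in sup X).
have [E_neq0|/nonemptyPn ->] := pselect (E !=set0)%classic; last by rewrite sup0.
by apply: ge_sup => // _ [x /= x1 <-]; rewrite -[K]mulr1 -x1 leAK.
Qed.

Lemma vnorm_mulmx_le_opnorm A x : vnorm x = 1 -> vnorm (A *m x) <= opnorm A.
Proof.
move=> x1; apply: sup_upper_bound; last by exists x.
split; first by exists (vnorm (A *m x)), x.
exists (\sum_j vnorm (col j A)) => _ [y /= y1 <-].
by rewrite -[leRHS]mulr1 -y1 vnorm_mulmx_le.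
Qed.

Lemma vnorm_col_le_opnorm A j : vnorm (col j A) <= opnorm A.
Proof. by rewrite colE vnorm_mulmx_le_opnorm ?vnorm_delta. Qed.

Lemma opnorm_ge0 A : 0 <= opnorm A.
Proof.
rewrite /opnorm; set E := (X in sup X).
have [[_ [x /= x1 _]]|/nonemptyPn ->] := pselect (E !=set0)%classic.
  exact: le_trans (vnorm_ge0 _) (vnorm_mulmx_le_opnorm _ x1).
by rewrite sup0.
Qed.

End OperatorNorm.

Section RealDiagonal.
Variables (R : realType) (n : nat).
Implicit Types (f g : 'I_n -> R).

Definition rdiag f : 'M[R[i]]_n := diag_mx (\row_i (f i)%:C).

Lemma rdiagE f i j : rdiag f i j = (f i)%:C *+ (i == j).
Proof. by rewrite !mxE. Qed.

Lemma adjmx_rdiag f : (rdiag f)^t* = rdiag f.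
Proof.
apply/matrixP => i j; rewrite !mxE eq_sym.
by case: eqP => [->|_]; rewrite ?conjC0 // !mulr1n; exact: conjc_real.
Qed.

Lemma mulmx_rdiag f g : rdiag f *m rdiag g = rdiag (fun i => f i * g i).
Proof. by rewrite mulmx_diag; congr diag_mx; apply/rowP => i; rewrite !mxE rmorphM. Qed.

Lemma rdiag_eq1 f : (forall i, f i = 1) -> rdiag f = 1%:M.
Proof. by move=> f1; apply/matrixP => i j; rewrite !mxE f1. Qed.

Lemma rdiagB1 f : rdiag f - 1%:M = rdiag (fun i => f i - 1).
Proof. by apply/matrixP => i j; rewrite !mxE rmorphB mulrnBl. Qed.

Lemma vnorm_rdiag_le f (e : R) (x : 'cV[R[i]]_n) :
  0 <= e -> (forall i, `|f i| <= e) -> vnorm (rdiag f *m x) <= e * vnorm x.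
Proof.
move=> e_ge0 le_fe; rewrite !vnormE -(ger0_norm e_ge0) -sqrtr_sqr -sqrtrM ?sqr_ge0 //.
apply: ler_wsqrtr; rewrite /vnorm2 mulr_sumr; apply: ler_sum => k _.
rewrite mul_diag_mx !mxE cabs2M cabs2R ler_wpM2r ?cabs2_ge0 //.
by rewrite -real_normK ?num_real // lerXn2r ?nnegrE ?normr_ge0.
Qed.

Lemma rdiag_comm_mx_fun f g (G : 'M[R[i]]_n) :
  (forall i j, f i = f j -> g i = g j) ->
  comm_mx (rdiag f) G -> comm_mx (rdiag g) G.
Proof.
move=> fg /matrixP commfG; apply/matrixP => i j; move: (commfG i j).
rewrite /rdiag !mul_diag_mx !mul_mx_diag !mxE.
have [->|Gij_neq0 fG] := eqVneq (G i j) 0; first by rewrite !mulr0 !mul0r.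
rewrite mulrC (fg i j) //; apply: complexI; apply: (mulIf Gij_neq0).
by rewrite fG mulrC.
Qed.

End RealDiagonal.

Section PolarDecomposition.
Variable R : realType.

Lemma comm_mx_conj m n (U : 'M[R[i]]_(m, n)) (A B : 'M[R[i]]_m) :
  U \is unitarymx -> comm_mx A B -> comm_mx (U^t* *m A *m U) (U^t* *m B *m U).
Proof.
move=> U_unitary AB; rewrite /comm_mx !mulmxA !mulmxtVK //.
by rewrite -!(mulmxA (U^t*)) AB.
Qed.

Lemma exists_orthogonal_columns n (P : 'M[R[i]]_n) :
  exists2 U : 'M[R[i]]_n, U \is unitarymx &
    (P *m U)^t* *m (P *m U) = rdiag (fun i => vnorm (col i (P *m U)) ^+ 2).
Proof.
set H := P^t* *m P.
have /orthomx_spectralP H_spectral : H \is normalmx.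
  by apply/normalmxP; rewrite /H trmx_mul map_mxM trmxCK.
have W_unitary := spectral_unitarymx H; set W := spectralmx H in H_spectral W_unitary.
set s := spectral_diag H in H_spectral; rewrite invmx_unitary // in H_spectral.
exists (W^t*); first by rewrite trmxC_unitary.
set Y := P *m W^t*.
have YtY : Y^t* *m Y = diag_mx s.
  rewrite trmx_mul map_mxM trmxCK mulmxA -(mulmxA _ _ P) -/H H_spectral.
  by rewrite !mulmxA (unitarymxP W_unitary) mul1mx mulmxtVK.
apply/matrixP => i j; rewrite rdiagE sqr_vnorm -adjmx_mul_diag YtY.
by rewrite !mxE eqxx mulr1n.
Qed.

Lemma near_isometry_polar n (P : 'M[R[i]]_n) (eps : R) :
  0 <= eps < 1 ->
  (forall x, (1 - eps) * vnorm x <= vnorm (P *m x) <= (1 + eps) * vnorm x) ->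
  exists S : 'M[R[i]]_n, [/\ P *m S \is unitarymx,
    forall x, vnorm ((P - P *m S) *m x) <= eps * vnorm x &
    forall D, comm_mx (P^t* *m P) D -> comm_mx S D].
Proof.
move=> /andP[eps_ge0 eps_lt1] P_bounds.
have [U U_unitary] := exists_orthogonal_columns P; set Y := P *m U.
set r := fun i => vnorm (col i Y) => YtY.
have r_bounds i : 1 - eps <= r i <= 1 + eps.
  have Ui1 : vnorm (col i U) = 1 by rewrite colE vnorm_unitary ?vnorm_delta.
  by have := P_bounds (col i U); rewrite Ui1 !mulr1 /r /Y colE -mulmxA -colE.
have r_neq0 i : r i != 0 by rewrite gt_eqF //; case/andP: (r_bounds i); lra.
set Rinv := rdiag (fun i => (r i)^-1).
set Q := Y *m Rinv.
have QtQ : Q^t* *m Q = 1%:M.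
  rewrite /Q trmx_mul map_mxM adjmx_rdiag -mulmxA (mulmxA (Y^t*)) YtY.
  by rewrite !mulmx_rdiag rdiag_eq1 // => i /=; rewrite -/(r i); field.
have P_polar : P = Q *m rdiag r *m U^t*.
  rewrite /Q /Rinv -(mulmxA Y) mulmx_rdiag rdiag_eq1 ?mulmx1 ?mulmxtVK // => i.
  by rewrite mulVf.
(* [U *m Rinv *m U^t*] is [(P^t* *m P)^(-1/2)], written in the eigenbasis [U]. *)
exists (U *m Rinv *m U^t*).
have PS : P *m (U *m Rinv *m U^t*) = Q *m U^t* by rewrite /Q /Y !mulmxA.
split.
- rewrite PS mul_unitarymx ?trmxC_unitary //.
  by apply/unitarymxP/mulmx1C.
- move=> x; rewrite PS {1}P_polar -mulmxBl -[X in _ - X]mulmx1 -mulmxBr rdiagB1.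
  rewrite -!(mulmxA Q) (vnorm_isometry _ QtQ) -mulmxA.
  rewrite -(vnorm_unitary x (_ : U^t* \is unitarymx)) ?trmxC_unitary //.
  apply: vnorm_rdiag_le => // i; rewrite ler_norml; case/andP: (r_bounds i); lra.
move=> D PtP_D.
have Rinv_comm : comm_mx Rinv (U^t* *m D *m U).
  apply: (@rdiag_comm_mx_fun _ _ (fun i => r i ^+ 2)).
    by move=> i j /eqP; rewrite eqrXn2 ?vnorm_ge0 // => /eqP->.
  have := comm_mx_conj U_unitary PtP_D.
  by rewrite !mulmxA -map_mxM -trmx_mul -(mulmxA (Y^t*)) YtY.
have := comm_mx_conj (_ : U^t* \is unitarymx) Rinv_comm.
rewrite trmxCK trmxC_unitary !mulmxA (unitarymxP U_unitary) mul1mx mulmxtVK //.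
by apply.
Qed.

Lemma near_isometry_bounds n (O P : 'M[R[i]]_n) (eps : R) :
  O^t* *m O = 1%:M -> (forall x, vnorm ((O - P) *m x) <= eps * vnorm x) ->
  forall x, (1 - eps) * vnorm x <= vnorm (P *m x) <= (1 + eps) * vnorm x.
Proof.
move=> O_iso OP_le x; have := OP_le x.
have Ox : O *m x = P *m x + (O - P) *m x by rewrite mulmxBl addrC subrK.
have Px : P *m x = O *m x - (O - P) *m x by rewrite Ox addrK.
have := vnormD (P *m x) ((O - P) *m x); have := vnormB (O *m x) ((O - P) *m x).
by rewrite -Ox -Px (vnorm_isometry _ O_iso) => le1 le2 le3; apply/andP; split; lra.
Qed.

End PolarDecomposition.

Lemma natr_sub_sqr_ge1 (R : realDomainType) (a b : nat) :
  a != b -> 1 <= (a%:R - b%:R : R) ^+ 2.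
Proof.
case: (ltngtP a b) => [ab|ba|->]; rewrite ?eqxx // => _.
  by move: ab; rewrite -(ler_nat R) -natr1; nra.
by move: ba; rewrite -(ler_nat R) -natr1; nra.
Qed.

Section BlockPart.
Variables (R : realType) (n : nat) (d : 'I_n -> nat).
Implicit Types (A : 'M[R[i]]_n).

Definition block_part A : 'M[R[i]]_n :=
  \matrix_(i, j) if d i == d j then A i j else 0.

Lemma comm_natdiag A : (forall i j, d i != d j -> A i j = 0) -> comm_mx (natdiag d) A.
Proof.
move=> A_block; apply/matrixP => i j; rewrite /natdiag mul_mx_diag mul_diag_mx !mxE.
have [->|/A_block->] := eqVneq (d i) (d j); first exact: mulrC.
by rewrite mulr0 mul0r.
Qed.

Lemma comm_natdiag_block_part A : comm_mx (natdiag d) (block_part A).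
Proof. by apply: comm_natdiag => i j /negbTE dij; rewrite mxE dij. Qed.

Lemma comm_natdiag_adj_block_part A : comm_mx (natdiag d) ((block_part A)^t*).
Proof.
by apply: comm_natdiag => i j dij; rewrite !mxE eq_sym (negbTE dij) conjC0.
Qed.

Lemma cabs2_le_commutator A i j :
  d i != d j -> cabs2 (A i j) <= cabs2 (commutator A (natdiag d) i j).
Proof.
move=> dij; have -> : commutator A (natdiag d) i j = A i j * ((d j)%:R - (d i)%:R : R)%:C.
  by rewrite /commutator /natdiag mul_mx_diag mul_diag_mx !mxE rmorphB !rmorph_nat; ring.
by rewrite cabs2M cabs2R ler_peMr ?cabs2_ge0 // natr_sub_sqr_ge1 // eq_sym.
Qed.

Lemma vnorm_col_sub_block_part_le A j :
  vnorm (col j (A - block_part A)) <= vnorm (col j (commutator A (natdiag d))).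
Proof.
rewrite !vnormE ler_wsqrtr // ler_sum // => i _.
have -> : col j (A - block_part A) i 0 = if d i == d j then 0 else A i j.
  by rewrite !mxE; case: ifP; rewrite ?subrr ?subr0.
rewrite mxE; case: eqVneq => [_|dij]; first by rewrite cabs20 cabs2_ge0.
exact: cabs2_le_commutator.
Qed.

Lemma vnorm_mulmx_sub_block_part A x :
  vnorm ((A - block_part A) *m x) <= n%:R * opnorm (commutator A (natdiag d)) * vnorm x.
Proof.
apply: le_trans (vnorm_mulmx_le _ _) _; rewrite ler_wpM2r ?vnorm_ge0 //.
have -> : n%:R * opnorm (commutator A (natdiag d)) =
          \sum_(j < n) opnorm (commutator A (natdiag d)).
  by rewrite sumr_const card_ord mulr_natl.
apply: ler_sum => j _.
exact: le_trans (vnorm_col_sub_block_part_le A j) (vnorm_col_le_opnorm _ j).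
Qed.

End BlockPart.

Theorem mainTheorem5 (R : realType) (n : nat) (d : 'I_n -> nat)
    (hd : forall k : 'I_n, (0 < d k)%N)
    (O : 'M[R[i]]_n) (hO : unitary O) :
  exists V : 'M[R[i]]_n,
    [/\ unitary V, commutator V (natdiag d) = 0 &
        opnorm (O - V) <= (2 * n)%:R * opnorm (commutator O (natdiag d))].
Proof.
move/unitaryP: hO => O_unitary; have O_iso : O^t* *m O = 1%:M.
  exact/mulmx1C/unitarymxP.
set D := natdiag d; set eps := n%:R * opnorm (commutator O D).
have -> : (2 * n)%:R * opnorm (commutator O D) = 2 * eps by rewrite natrM mulrA.
have eps_ge0 : 0 <= eps by rewrite mulr_ge0 ?opnorm_ge0.
have commutator_eq0 V : comm_mx D V -> commutator V D = 0.
  by rewrite /commutator => ->; rewrite subrr.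
have [eps_ge1|eps_lt1] := lerP 1 eps.
  exists 1%:M; split; last 2 first.
  - by apply: commutator_eq0; apply: comm_mx1.
  - apply: opnorm_le => [|x]; first by rewrite mulr_ge0.
    rewrite mulmxBl mul1mx; apply: le_trans (vnormB _ _) _.
    by rewrite (vnorm_isometry _ O_iso); have := vnorm_ge0 x; nra.
  by apply/unitaryP/unitarymxP; rewrite trmx1 map_mx1 mulmx1.
set P := block_part d O.
have OP_le x : vnorm ((O - P) *m x) <= eps * vnorm x := vnorm_mulmx_sub_block_part d O x.
have eps_range : 0 <= eps < 1 by rewrite eps_ge0 eps_lt1.
have [S [PS_unitary PS_le S_comm]] :=
  near_isometry_polar eps_range (near_isometry_bounds O_iso OP_le).
exists (P *m S); split; first exact/unitaryP.
  apply/commutator_eq0/comm_mxM; first exact: comm_natdiag_block_part.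
  apply/comm_mx_sym/S_comm/comm_mx_sym/comm_mxM.
    exact: comm_natdiag_adj_block_part.
  exact: comm_natdiag_block_part.
apply: opnorm_le => [|x]; first by rewrite mulr_ge0.
rewrite -(subrK P O) -addrA mulmxDl; apply: le_trans (vnormD _ _) _.
by have := OP_le x; have := PS_le x; lra.
Qed.
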